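(* Let $R$ be a semisimple ring and $(a,b)\in R^2$. Then the cyclic submodule $R(a,b)$ is free if and only if $(a,b)$ is admissible.
   Context: All rings are associative with identity $1\neq0$. $R^2$ is the free left $R$-module of pairs; $R(a,b)=\{(\alpha a,\alpha b):\alpha\in R\}$ is free if $r(a,b)=(0,0)$ implies $r=0$. A pair $(a,b)$ is admissible if there exist $c,d\in R$ such that $\begin{pmatrix}a&b\\c&d\end{pmatrix}\in GL_2(R)$. *)

From HB Require Import structures.
From mathcomp Require Import all_boot all_order all_algebra.
Set Implicit Arguments. Unset Strict Implicit. Unset Printing Implicit Defensive.
Import GRing.Theory.
Local Open Scope ring_scope.

Definition left_ideal (R : nzRingType) (I : R -> Prop) : Prop :=
  [/\ I 0, (forall x y, I x -> I y -> I (x + y)) & (forall r x, I x -> I (r * x))].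

(* R is (left) semisimple: R as a left R-module is semisimple, i.e. every
   left ideal is a direct summand of R. *)
Definition semisimple_ring (R : nzRingType) : Prop :=
  forall I : R -> Prop, left_ideal I ->
    exists J : R -> Prop, [/\ left_ideal J,
                  (forall x, I x -> J x -> x = 0) &
                  (forall x, exists i j, [/\ I i, J j & x = i + j])].

Definition mx2 (R : nzRingType) (a b c d : R) : 'M[R]_2 :=
  \matrix_(i < 2, j < 2)
     if i == 0 then (if j == 0 then a else b) else (if j == 0 then c else d).

Definition inGL2 (R : nzRingType) (M : 'M[R]_2) : Prop :=
  exists N : 'M[R]_2, M *m N = 1%:M /\ N *m M = 1%:M.

(* R(a,b) is free: r(a,b) = (0,0) implies r = 0. *)
Definition free_cyclic (R : nzRingType) (a b : R) : Prop :=
  forall r : R, r * a = 0 -> r * b = 0 -> r = 0.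

Definition admissible (R : nzRingType) (a b : R) : Prop :=
  exists c d : R, inGL2 (mx2 a b c d).

From HB Require Import structures.
From mathcomp Require Import all_boot all_order all_algebra.
From Stdlib Require Import Classical ClassicalEpsilon.
Set Implicit Arguments. Unset Strict Implicit. Unset Printing Implicit Defensive.
Import GRing.Theory.
Local Open Scope ring_scope.

(* In a semisimple ring every left ideal is generated by an idempotent, which
   makes R von Neumann regular, left noetherian and directly finite.  Together
   these make R unit-regular: writing a = a w a, among the elements
   z = a + (1 - a w) t (1 - w a) pick one with R z maximal; maximality forces
   the complement of R z to vanish, so z is a unit and a = a z^-1 a.
   For free_cyclic a b => admissible a b, unit-regularity turns a into an
   idempotent g = a u, and (1 - g) b into an idempotent k; freeness of (a, b)
   gives k (1 - g) = 1 - g, and the pair (a, b) becomes the first row of the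
   product of the involution [[g, k], [1 - g, 1 - k]] with an invertible upper
   triangular matrix. *)

Definition lmultiple (R : nzRingType) (u v : R) : Prop := exists r, u = r * v.

Lemma left_ideal_lmultiple (R : nzRingType) (v : R) : left_ideal (fun u => lmultiple u v).
Proof.
split; first by exists 0; rewrite mul0r.
- by move=> _ _ [r ->] [s ->]; exists (r + s); rewrite mulrDl.
- by move=> r _ [s ->]; exists (r * s); rewrite mulrA.
Qed.

Lemma left_idealB (R : nzRingType) (I : R -> Prop) x y :
  left_ideal I -> I x -> I y -> I (x - y).
Proof. by case=> _ HD HM Ix Iy; apply: HD => //; rewrite -mulN1r; apply: HM. Qed.

Lemma left_ideal_lann (R : nzRingType) (z : R) : left_ideal (fun y => y * z = 0).
Proof.
split; first by rewrite mul0r.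
- by move=> x y Hx Hy; rewrite mulrDl Hx Hy addr0.
- by move=> r x Hx; rewrite -mulrA Hx mulr0.
Qed.

Section Semisimple.

Variable R : nzRingType.
Hypothesis semisimpleR : semisimple_ring R.

(* The component in I of the decomposition 1 = e + j along R = I + J. *)
Lemma left_ideal_idempotent_generator (I : R -> Prop) :
  left_ideal I -> exists e, I e /\ forall x, I x -> x = x * e.
Proof.
move=> HI; have [J [HJ IJ0 IJ1]] := semisimpleR HI.
have [e [j [Ie Jj E]]] := IJ1 1.
exists e; split=> // x Ix.
have xj : x * j = x - x * e.
  have -> : j = 1 - e by rewrite E addrC addKr.
  by rewrite mulrBr mulr1.
have : x * j = 0.
  apply: IJ0; last by case: HJ => _ _; apply.
  by rewrite xj; apply: left_idealB => //; case: HI => _ _; apply.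
by rewrite xj => /eqP; rewrite subr_eq0 => /eqP.
Qed.

Lemma lann_generator (z : R) :
  exists k, k * z = 0 /\ forall y, y * z = 0 -> y = y * k.
Proof. exact: left_ideal_idempotent_generator (left_ideal_lann z). Qed.

Lemma lmultiple_complement (z : R) :
  exists d, (forall x, lmultiple (x * d) z -> x * d = 0) /\
            exists r s, r * z + s * d = 1.
Proof.
have [J [HJ zJ0 zJ1]] := semisimpleR (left_ideal_lmultiple z).
have [d [Jd dgen]] := left_ideal_idempotent_generator HJ.
have Jxd x : J (x * d) by case: HJ => _ _; apply.
exists d; split=> [x zx|]; first exact: zJ0.
have [_ [j [[r ->] Jj E]]] := zJ1 1.
by exists r, j; rewrite -dgen.
Qed.

Lemma semisimple_regular (x : R) : exists w, x = x * w * x.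
Proof.
have [_ [[w ->] egen]] := left_ideal_idempotent_generator (left_ideal_lmultiple x).
by exists w; rewrite -mulrA; apply: egen; exists 1; rewrite mul1r.
Qed.

Lemma semisimple_acc (S : nat -> R -> Prop) :
  (forall n, left_ideal (S n)) -> (forall n x, S n x -> S n.+1 x) ->
  exists N, forall n x, S n x -> S N x.
Proof.
move=> HS Sinc.
have Smono n m x : (n <= m)%N -> S n x -> S m x.
  move=> /subnK <-; elim: (m - n)%N => [//|i IH] Sx.
  by rewrite addSn; apply: Sinc; apply: IH.
have HU : left_ideal (fun x => exists n, S n x).
  split; first by exists 0%N; case: (HS 0%N).
  - move=> x y [n Sx] [m Sy]; exists (maxn n m); case: (HS (maxn n m)) => _ HD _.
    by apply: HD; [apply: Smono Sx; apply: leq_maxl | apply: Smono Sy; apply: leq_maxr].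
  - by move=> r x [n Sx]; exists n; case: (HS n) => _ _; apply.
have [g [[N SNg] ggen]] := left_ideal_idempotent_generator HU.
exists N => n x Sx; rewrite (ggen x); last by exists n.
by case: (HS N) => _ _; apply.
Qed.

(* The left annihilators of y^n form an ascending chain; once it is stable,
   (1 - y x) x^N, which kills y^(N+1), also kills y^N. *)
Lemma semisimple_directly_finite (x y : R) : x * y = 1 -> y * x = 1.
Proof.
move=> xy1.
pose S n := fun r : R => r * y ^+ n = 0.
have Sinc n r : S n r -> S n.+1 r by rewrite /S exprSr mulrA => ->; rewrite mul0r.
have [N SN] := semisimple_acc (fun n => left_ideal_lann (y ^+ n)) Sinc.
have xyn n : x ^+ n * y ^+ n = 1.
  elim: n => [|n IH]; first by rewrite !expr0 mulr1.
  by rewrite exprS exprSr -!mulrA (mulrA (x ^+ n)) IH mul1r xy1.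
have : S N.+1 ((1 - y * x) * x ^+ N).
  by rewrite /S exprSr -mulrA (mulrA (x ^+ N)) xyn mul1r mulrBl mul1r -mulrA xy1 mulr1 subrr.
move/SN; rewrite /S -mulrA xyn mulr1 => /eqP.
by rewrite subr_eq0 => /eqP <-.
Qed.

Lemma exists_maximal_lmultiple (T : Type) (f : T -> R) (t0 : T) :
  exists t, forall t', lmultiple (f t) (f t') -> lmultiple (f t') (f t).
Proof.
apply: NNPP => nomax.
have [F HF] : exists F : T -> T, forall t,
    lmultiple (f t) (f (F t)) /\ ~ lmultiple (f (F t)) (f t).
  apply: (choice (fun t t' => lmultiple (f t) (f t') /\ ~ lmultiple (f t') (f t))) => t.
  have [t' Ht'] := not_all_ex_not _ _ (not_ex_all_not _ _ nomax t).
  by exists t'; apply: imply_to_and.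
pose S n := fun x => lmultiple x (f (iter n F t0)).
have Sinc n x : S n x -> S n.+1 x.
  by move=> [r ->]; have [[s ->] _] := HF (iter n F t0); exists (r * s); rewrite mulrA.
have [N SN] := semisimple_acc (fun n => left_ideal_lmultiple _) Sinc.
by apply: (HF (iter N F t0)).2; apply: (SN N.+1); exists 1; rewrite mul1r.
Qed.

Lemma lmul_rmul_zero_swap (k d : R) :
  (forall r, k * r * d = 0) -> forall r, d * r * k = 0.
Proof.
move=> krd r; have [v ->] := semisimple_regular (d * r * k).
have -> : d * r * k * v * (d * r * k) = d * r * (k * v * d) * r * k by rewrite !mulrA.
by rewrite krd mulr0 !mul0r.
Qed.

Section ComplementOfPrincipal.

Variables z d k : R.
Hypothesis kgen : forall y, y * z = 0 -> y = y * k.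
Hypothesis d_orth : forall x, lmultiple (x * d) z -> x * d = 0.
Hypothesis dRk0 : forall r, d * r * k = 0.

(* From x d z^(N+1) = sum_(i <= N) c_i d z^i, the element
   Y = x d z^N - sum_(i < N) c_(i+1) d z^i satisfies Y z = c_0 d in R z, hence
   Y z = 0, so Y = Y k = 0, and induction applies. *)
Lemma power_sum_orth N x (c : nat -> R) :
  x * d * z ^+ N = \sum_(i < N) c i * d * z ^+ i -> x * d = 0.
Proof.
elim: N x c => [|N IH] x c; first by rewrite big_ord0 expr0 mulr1.
rewrite big_ord_recl /= expr0 mulr1 => E.
set Y := x * d * z ^+ N - \sum_(i < N) c i.+1 * d * z ^+ i.
have Yz : Y * z = c 0%N * d.
  rewrite /Y mulrBl mulr_suml -(mulrA (x * d)) -exprSr E.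
  rewrite [X in _ - X](eq_bigr (fun i : 'I_N => c (bump 0 i) * d * z ^+ bump 0 i)).
    by rewrite addrK.
  by move=> i _; rewrite exprSr mulrA.
have Yz0 : Y * z = 0 by rewrite Yz; apply: d_orth; exists Y.
have Y0 : Y = 0.
  rewrite (kgen Yz0) /Y mulrBl mulr_suml big1 => [|i _].
    by rewrite -!mulrA (mulrA d) dRk0 !mulr0 subr0.
  by rewrite -!mulrA (mulrA d) dRk0 !mulr0.
by apply: (IH x (fun i => c i.+1)); apply/eqP; rewrite -subr_eq0; apply/eqP.
Qed.

(* The chain of left ideals sum_(i < n) R d z^i stabilises, so d z^N is a
   combination of the d z^i with i < N. *)
Lemma complement_trivial : d = 0.
Proof.
pose S n := fun x => exists c : nat -> R, x = \sum_(i < n) c i * d * z ^+ i.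
have HS n : left_ideal (S n).
  split.
  - by exists (fun _ => 0); rewrite big1 // => i _; rewrite !mul0r.
  - move=> _ _ [c1 ->] [c2 ->]; exists (fun i => c1 i + c2 i).
    by rewrite -big_split; apply: eq_bigr => i _; rewrite !mulrDl.
  - move=> r _ [c ->]; exists (fun i => r * c i).
    by rewrite mulr_sumr; apply: eq_bigr => i _; rewrite !mulrA.
have Sinc n x : S n x -> S n.+1 x.
  move=> [c ->]; exists (fun i => if (i < n)%N then c i else 0).
  rewrite big_ord_recr /= ltnn !mul0r addr0.
  by apply: eq_bigr => i _; rewrite ltn_ord.
have [N SN] := semisimple_acc HS Sinc.
have : S N.+1 (d * z ^+ N).
  exists (fun i => if i == N then 1 else 0).
  rewrite big_ord_recr /= eqxx mul1r big1 ?add0r // => i _.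
  by rewrite ltn_eqF // !mul0r.
move=> /SN [c E]; rewrite -[d]mul1r; apply: (@power_sum_orth N _ c).
by rewrite mul1r.
Qed.

End ComplementOfPrincipal.

Section UnitRegular.

Variables a w : R.
Hypothesis awa : a = a * w * a.

Local Notation p := (a * w).
Local Notation e := (w * a).
Local Notation z t := (a + (1 - a * w) * t * (1 - w * a)).

Lemma idempotent_aw : p * p = p.
Proof. by rewrite mulrA -awa. Qed.

Lemma idempotent_wa : e * e = e.
Proof. by rewrite -mulrA (mulrA a) -awa. Qed.

Lemma mul_aw_compl : p * (1 - p) = 0.
Proof. by rewrite mulrBr mulr1 idempotent_aw subrr. Qed.

Lemma mul_compl_wa : (1 - e) * e = 0.
Proof. by rewrite mulrBl mul1r idempotent_wa subrr. Qed.

Lemma z_lmul t : p * z t = a.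
Proof. by rewrite mulrDr -awa !mulrA mul_aw_compl !mul0r addr0. Qed.

Lemma z_rmul t : z t * e = a.
Proof. by rewrite mulrDl -!mulrA mul_compl_wa !mulr0 addr0 mulrA -awa. Qed.

Lemma z_rmul_inner t : z t * (w * a * w) = p.
Proof. by rewrite !mulrA -(mulrA (z t)) z_rmul. Qed.

Lemma lmultiple_z_wa y t : lmultiple (y * e) (z t).
Proof.
exists (y * (w * a * w) * p).
by rewrite -mulrA z_lmul -mulrA -(mulrA w a w) -mulrA -awa.
Qed.

(* Adding (1 - p) k r d (1 - e) to z keeps R z inside R (z + ...), so by
   maximality k r d (1 - e) lies in R z, and so does k r d e. *)
Lemma maximal_lann_complement_orth t k d :
  (forall t', lmultiple (z t) (z t') -> lmultiple (z t') (z t)) ->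
  k * z t = 0 -> (forall y, y * z t = 0 -> y = y * k) ->
  (forall x, lmultiple (x * d) (z t) -> x * d = 0) ->
  forall r, k * r * d = 0.
Proof.
move=> zmax kz kgen d_orth r.
set s := (1 - p) * (k * r * d) * (1 - e).
have kp : k * (1 - p) = k.
  by rewrite mulrBr mulr1 -(z_rmul_inner t) (mulrA k) kz mul0r subr0.
have kk : k * k = k by rewrite -kgen.
have ks : k * s = k * r * d * (1 - e) by rewrite /s !mulrA kp kk.
have kzs : k * (z t + s) = k * r * d * (1 - e) by rewrite mulrDr kz add0r ks.
have zs : z (t + k * r * d) = z t + s by rewrite (mulrDr (1 - p)) mulrDl addrA.
have : lmultiple (z t) (z (t + k * r * d)).
  exists (1 - (1 - p) * k); rewrite zs (mulrBl (z t + s)) mul1r -(mulrA (1 - p) k) kzs.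
  by rewrite (mulrA (1 - p)) addrK.
move=> /zmax; rewrite zs => -[c zsc].
have krd1e : lmultiple (k * r * d * (1 - e)) (z t).
  by exists (k * c); rewrite -kzs zsc mulrA.
apply: d_orth; rewrite -[k * r * d](subrK (k * r * d * e)) -{1}[k * r * d]mulr1 -mulrBr.
case: (left_ideal_lmultiple (z t)) => _ HD _; apply: HD => //; exact: lmultiple_z_wa.
Qed.

Lemma unit_regular_of_inner_inverse :
  exists u v : R, [/\ u * v = 1, v * u = 1 & a = a * u * a].
Proof.
have [t zmax] := exists_maximal_lmultiple (fun t => z t) 0.
have [k [kz kgen]] := lann_generator (z t).
have [d [d_orth [r [s rzsd]]]] := lmultiple_complement (z t).
have d0 : d = 0.
  apply: (@complement_trivial (z t) d k kgen d_orth); apply: lmul_rmul_zero_swap.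
  exact: (maximal_lann_complement_orth zmax kz kgen d_orth).
have rz : r * z t = 1 by move: rzsd; rewrite d0 mulr0 addr0.
have pz := z_lmul t; have ze := z_rmul t.
set zt := z t in rz pz ze *.
exists r, zt; split=> //; first exact: semisimple_directly_finite.
have : p * zt * r * (zt * e) = a.
  have -> : p * zt * r * (zt * e) = p * (zt * (r * zt)) * e by rewrite !mulrA.
  by rewrite rz mulr1 pz mulrA -awa.
by rewrite pz ze => ->.
Qed.

End UnitRegular.

Lemma semisimple_unit_regular (a : R) :
  exists u v : R, [/\ u * v = 1, v * u = 1 & a = a * u * a].
Proof. by have [w awa] := semisimple_regular a; exact: unit_regular_of_inner_inverse awa. Qed.

End Semisimple.

Section Mx2.

Variable R : nzRingType.

Lemma mx2_mul (a b c d a' b' c' d' : R) :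
  mx2 a b c d *m mx2 a' b' c' d' =
  mx2 (a * a' + b * c') (a * b' + b * d') (c * a' + d * c') (c * b' + d * d').
Proof.
apply/matrixP => i j; rewrite !mxE big_ord_recr big_ord_recl big_ord0 !mxE /= addr0.
by case: i => -[|[|//]] Hi; case: j => -[|[|//]] Hj.
Qed.

Lemma mx2_1 : mx2 (1 : R) 0 0 1 = 1%:M.
Proof.
by apply/matrixP => i j; rewrite !mxE; case: i => -[|[|//]] Hi; case: j => -[|[|//]] Hj.
Qed.

Lemma mx2_00 (a b c d : R) : mx2 a b c d 0 0 = a.
Proof. by rewrite mxE. Qed.

Lemma inGL2_mul (A B : 'M[R]_2) : inGL2 A -> inGL2 B -> inGL2 (A *m B).
Proof.
move=> [A' [AA' A'A]] [B' [BB' B'B]]; exists (B' *m A'); split.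
- by rewrite mulmxA -(mulmxA A) BB' mulmx1 AA'.
- by rewrite mulmxA -(mulmxA B') A'A mulmx1 B'B.
Qed.

Lemma inGL2_mx2_idempotents (g h k : R) :
  g + h = 1 -> g * g = g -> k * k = k -> g * k = 0 -> h * g = 0 ->
  h * k = k -> k * h = h -> inGL2 (mx2 g k h (1 - k)).
Proof.
move=> gh1 gg kk gk hg hk kh.
have k1k : k * (1 - k) = 0 by rewrite mulrBr mulr1 kk subrr.
exists (mx2 g k h (1 - k)); rewrite mx2_mul -mx2_1; split; congr mx2.
all: rewrite ?gg ?kh ?gk ?k1k ?hg ?hk ?addr0 ?add0r //.
all: by rewrite mulrBl mul1r ?kh ?k1k ?subrr ?subr0 // subrKC.
Qed.

Lemma inGL2_upper_triangular (u v u' v' b : R) :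
  u * v = 1 -> v * u = 1 -> u' * v' = 1 -> v' * u' = 1 ->
  inGL2 (mx2 v b 0 v').
Proof.
move=> uv vu uv' vu'; exists (mx2 u (- (u * b * u')) 0 u').
rewrite !mx2_mul -mx2_1; split; congr mx2.
all: rewrite ?mulr0 ?mul0r ?addr0 ?add0r ?vu ?uv ?vu' ?uv' //.
- by rewrite mulrN !mulrA vu mul1r addNr.
- by rewrite mulNr -(mulrA (u * b) u' v') uv' mulr1 subrr.
Qed.

Lemma admissible_free_cyclic (a b : R) : admissible a b -> free_cyclic a b.
Proof.
move=> [c [d [N [MN _]]]] r ra rb.
have := congr1 (fun M : 'M[R]_2 => M 0 0) MN.
rewrite -(mx2_1) mx2_00 !mxE big_ord_recr big_ord_recl big_ord0 !mxE /= addr0 => E.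
by rewrite -[r]mulr1 -E mulrDr !mulrA ra rb !mul0r addr0.
Qed.

End Mx2.

(* Anything killing both g and k kills a = g v and b = g b + k (h b), so
   freeness gives k h = h. *)
Lemma free_cyclic_admissible (R : nzRingType) (a b : R) :
  semisimple_ring R -> free_cyclic a b -> admissible a b.
Proof.
move=> semisimpleR freeab.
have [u [v [uv vu aua]]] := semisimple_unit_regular semisimpleR a.
set g := a * u; set h := 1 - g.
have gv : g * v = a by rewrite /g -mulrA uv mulr1.
have gg : g * g = g by rewrite /g mulrA -aua.
have gh1 : g + h = 1 by rewrite /h addrC subrK.
have hg : h * g = 0 by rewrite /h mulrBl mul1r gg subrr.
have gh : g * h = 0 by rewrite /h mulrBr mulr1 gg subrr.
have hh : h * h = h by rewrite {1}/h mulrBl mul1r gh subr0.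
have [u' [v' [uv' vu' hbu]]] := semisimple_unit_regular semisimpleR (h * b).
set k := h * b * u'.
have kk : k * k = k by rewrite /k mulrA -hbu.
have hk : h * k = k by rewrite /k !mulrA hh.
have gk : g * k = 0 by rewrite -hk mulrA gh mul0r.
have kv' : k * v' = h * b by rewrite /k -mulrA uv' mulr1.
have bsplit : b = g * b + k * (h * b) by rewrite -hbu /k -mulrDl gh1 mul1r.
have kill r : r * g = 0 -> r * k = 0 -> r = 0.
  move=> rg rk; apply: freeab; first by rewrite -gv mulrA rg mul0r.
  by rewrite bsplit mulrDr (mulrA r g) rg mul0r add0r (mulrA r k) rk mul0r.
have kh : k * h = h.
  apply/eqP; rewrite eq_sym -subr_eq0; apply/eqP/kill.
  - by rewrite mulrBl hg -mulrA hg mulr0 subrr.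
  - by rewrite mulrBl hk -mulrA hk kk subrr.
exists (h * v), (h * b + (1 - k) * v').
have -> : mx2 a b (h * v) (h * b + (1 - k) * v') = mx2 g k h (1 - k) *m mx2 v b 0 v'.
  by rewrite mx2_mul !mulr0 !addr0 gv kv' -mulrDl gh1 mul1r.
apply: inGL2_mul; first exact: inGL2_mx2_idempotents.
exact: inGL2_upper_triangular uv vu uv' vu'.
Qed.

Theorem mainTheorem11 (R : nzRingType) (a b : R) :
  semisimple_ring R -> (free_cyclic a b <-> admissible a b).
Proof.
move=> semisimpleR; split; first exact: free_cyclic_admissible.
exact: admissible_free_cyclic.
Qed.
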